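(* The space $\mathcal K=\bigcup_{d\ge 2}\mathcal O_d$ of all polynomial knots, equipped with the inductive limit topology, is homotopy equivalent to $S^2$.
   Context: A polynomial map is a map $\phi:\mathbb R\to\mathbb R^3$ whose three component functions are real polynomials. A polynomial knot is a polynomial map which is a smooth embedding, i.e. $\phi$ is injective and $\phi'(t)\neq 0$ for all $t$. For an integer $d\ge 2$, $\mathcal A_d$ denotes the set of polynomial maps $t\mapsto (f(t),g(t),h(t))$ with $\deg f\le d-2$, $\deg g\le d-1$, $\deg h\le d$ (the zero polynomial allowed). Writing $f=\sum_{i=0}^{d-2}a_it^i$, $g=\sum_{i=0}^{d-1}b_it^i$, $h=\sum_{i=0}^{d}c_it^i$, the bijection $\eta:\mathcal A_d\to\mathbb R^{3d}$, $(f,g,h)\mapsto(a_0,\dots,a_{d-2},b_0,\dots,b_{d-1},c_0,\dots,c_d)$ is declared a homeomorphism (Euclidean topology on $\mathbb R^{3d}$). $\mathcal O_d$ is the set of polynomial knots in $\mathcal A_d$, with the subspace topology. Every polynomial knot lies in some $\mathcal O_d$, and $\mathcal K=\bigcup_{d\ge2}\mathcal O_d$ is the set of all polynomial knots. The inductive limit topology on $\mathcal K$: a set $V\subseteq\mathcal K$ is open iff $V\cap\mathcal O_d$ is open in $\mathcal O_d$ for every $d\ge 2$. *)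

From Stdlib Require Import Reals.
Open Scope R_scope.

(* A topology on X is given by its predicate of open sets. *)
Definition topology (X : Type) := (X -> Prop) -> Prop.

Definition continuous {X Y : Type} (TX : topology X) (TY : topology Y)
  (f : X -> Y) : Prop :=
  forall V : Y -> Prop, TY V -> TX (fun x => V (f x)).

Definition prod_top {X Y : Type} (TX : topology X) (TY : topology Y)
  : topology (X * Y) :=
  fun W => forall x y, W (x, y) ->
    exists (U : X -> Prop) (V : Y -> Prop),
      TX U /\ TY V /\ U x /\ V y /\
      (forall x' y', U x' -> V y' -> W (x', y')).

Definition I01 := { t : R | 0 <= t <= 1 }.
Definition I01_top : topology I01 :=
  fun U => forall p, U p -> exists eps, eps > 0 /\
    forall q : I01, Rabs (proj1_sig q - proj1_sig p) < eps -> U q.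

Definition homotopic {X Y : Type} (TX : topology X) (TY : topology Y)
  (f g : X -> Y) : Prop :=
  exists H : X * I01 -> Y,
    continuous (prod_top TX I01_top) TY H /\
    (forall x t, proj1_sig t = 0 -> H (x, t) = f x) /\
    (forall x t, proj1_sig t = 1 -> H (x, t) = g x).

Definition homotopy_equivalent {X Y : Type} (TX : topology X) (TY : topology Y)
  : Prop :=
  exists (f : X -> Y) (g : Y -> X),
    continuous TX TY f /\ continuous TY TX g /\
    homotopic TX TX (fun x => g (f x)) (fun x => x) /\
    homotopic TY TY (fun y => f (g y)) (fun y => y).

Definition sq3 (v : R * R * R) : R :=
  let '(x, y, z) := v in x * x + y * y + z * z.
Definition S2 := { v : R * R * R | sq3 v = 1 }.
Definition dist2_R3 (v w : R * R * R) : R :=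
  let '(x, y, z) := v in let '(x', y', z') := w in
  (x - x') * (x - x') + (y - y') * (y - y') + (z - z') * (z - z').
Definition S2_top : topology S2 :=
  fun U => forall p, U p -> exists eps, eps > 0 /\
    forall q : S2, dist2_R3 (proj1_sig q) (proj1_sig p) < eps * eps -> U q.

(* A real polynomial is given by its coefficient sequence (coefficient of t^i
   at index i); a polynomial map R -> R^3 is a triple (f, g, h). *)
Definition PolyMap := ((nat -> R) * (nat -> R) * (nat -> R))%type.

Definition pf (p : PolyMap) := fst (fst p).
Definition pg (p : PolyMap) := snd (fst p).
Definition ph (p : PolyMap) := snd p.

Definition peval (c : nat -> R) (N : nat) (t : R) : R :=
  sum_f_R0 (fun i => c i * t ^ i) N.
Definition pderiv (c : nat -> R) (N : nat) (t : R) : R :=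
  sum_f_R0 (fun i => INR (S i) * c (S i) * t ^ i) N.

Definition map_eval (p : PolyMap) (N : nat) (t : R) : R * R * R :=
  (peval (pf p) N t, peval (pg p) N t, peval (ph p) N t).
Definition map_deriv (p : PolyMap) (N : nat) (t : R) : R * R * R :=
  (pderiv (pf p) N t, pderiv (pg p) N t, pderiv (ph p) N t).

Definition deg_bound (p : PolyMap) (N : nat) : Prop :=
  forall i, (N < i)%nat -> pf p i = 0 /\ pg p i = 0 /\ ph p i = 0.

Definition is_poly_knot (p : PolyMap) : Prop :=
  exists N, deg_bound p N /\
    (forall s t, map_eval p N s = map_eval p N t -> s = t) /\
    (forall t, map_deriv p N t <> (0, 0, 0)).

Definition in_A (d : nat) (p : PolyMap) : Prop :=
  forall i,
    ((d - 1 <= i)%nat -> pf p i = 0) /\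
    ((d <= i)%nat -> pg p i = 0) /\
    ((d + 1 <= i)%nat -> ph p i = 0).

(* squared Euclidean distance in R^{3d} between eta(p) and eta(q), for
   p, q in A_d (the terms with indices outside the coordinate ranges vanish) *)
Definition distA2 (d : nat) (p q : PolyMap) : R :=
  sum_f_R0 (fun i =>
    (pf p i - pf q i) * (pf p i - pf q i) +
    (pg p i - pg q i) * (pg p i - pg q i) +
    (ph p i - ph q i) * (ph p i - ph q i)) d.

Definition Knots := { p : PolyMap | is_poly_knot p }.

(* O_d inside K is { p in K | p in A_d }.  V subset K is open in the inductive
   limit topology iff for each d >= 2, V cap O_d is open in O_d, where O_d has
   the subspace topology of A_d ~ R^{3d} (Euclidean). *)
Definition K_top : topology Knots :=
  fun V => forall d : nat, (2 <= d)%nat ->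
    forall p : Knots, in_A d (proj1_sig p) -> V p ->
      exists eps, eps > 0 /\
        forall q : Knots, in_A d (proj1_sig q) ->
          distA2 d (proj1_sig p) (proj1_sig q) < eps * eps -> V q.

(* Send a knot p to its unit tangent p'(0)/|p'(0)| in S^2, and v in S^2 to the line
   t |-> t v; the composite on S^2 is the identity.  On K, rescale p s (0 <= s <= 1)
   deforms p into the line through its unit tangent at 0: for s > 0 it is the
   reparametrisation t |-> p(s t) followed by a positive dilation and a translation of
   R^3, hence still a knot, and it never raises degrees, so it preserves every O_d.
   It is continuous on each O_d x [0,1], its coefficients being continuous in those of p
   and in s, and the tube lemma over [0,1] turns this into continuity for the inductive
   limit topology. *)

From Stdlib Require Import Reals Lra Lia Classical FunctionalExtensionality ProofIrrelevance.
Open Scope R_scope.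

Lemma sum_term_le (T : nat -> R) n i :
  (forall j, 0 <= T j) -> (i <= n)%nat -> T i <= sum_f_R0 T n.
Proof.
  intros HT Hi; induction n as [|n IH]; simpl.
  - replace i with 0%nat by lia; lra.
  - destruct (Nat.eq_dec i (S n)) as [->|Hne].
    + pose proof (cond_pos_sum T n HT); lra.
    + specialize (IH ltac:(lia)); specialize (HT (S n)); lra.
Qed.

Lemma sum_lt_mul (T : nat -> R) n e :
  (forall i, (i <= n)%nat -> T i < e) -> sum_f_R0 T n < INR (S n) * e.
Proof.
  intro HT; induction n as [|n IH]; simpl.
  - specialize (HT 0%nat (le_n 0)); lra.
  - specialize (IH (fun i Hi => HT i ltac:(lia))).
    specialize (HT (S n) (le_n _)).
    rewrite S_INR in *; destruct n; simpl in *; lra.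
Qed.

Lemma Rabs_lt_sq a e : Rabs a < e -> a * a < e * e.
Proof.
  intro H; pose proof (Rabs_pos a).
  rewrite <- (Rabs_right (a * a)), Rabs_mult by nra; nra.
Qed.

Lemma sq_lt_Rabs a e : 0 < e -> a * a < e * e -> Rabs a < e.
Proof.
  intros He H; rewrite <- (Rabs_right e) by lra; apply Rsqr_lt_abs_0; exact H.
Qed.

Lemma continuity_pt_eps (g : R -> R) x : continuity_pt g x ->
  forall e, 0 < e -> exists h, 0 < h /\
    forall y, Rabs (y - x) < h -> Rabs (g y - g x) < e.
Proof.
  intros Hc e He; destruct (Hc e He) as [h [Hh Hy]].
  exists h; split; [exact Hh|]; intros y Hyx.
  destruct (Req_dec y x) as [->|Hne].
  - rewrite Rminus_diag, Rabs_R0; exact He.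
  - apply (Hy y); repeat split; auto.
Qed.

Lemma Rmult_continuous_at x0 y0 e : 0 < e -> exists h, 0 < h /\
  forall x y, Rabs (x - x0) < h -> Rabs (y - y0) < h -> Rabs (x * y - x0 * y0) < e.
Proof.
  intro He.
  set (M := Rabs x0 + Rabs y0 + 1).
  assert (HM : 0 < M) by (unfold M; pose proof (Rabs_pos x0); pose proof (Rabs_pos y0); lra).
  set (h := Rmin 1 (e / M)).
  assert (Hh0 : 0 < h) by (apply Rmin_glb_lt; [lra|apply Rdiv_lt_0_compat; lra]).
  assert (HhM : h * M <= e).
  { pose proof (Rmin_r 1 (e / M)) as Hr; fold h in Hr.
    apply (Rmult_le_compat_r M) in Hr; [|lra].
    replace (e / M * M) with e in Hr by (field; lra); exact Hr. }
  assert (Hh1 : h <= 1) by apply Rmin_l.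
  exists h; split; [exact Hh0|]; intros x y Hx Hy.
  replace (x * y - x0 * y0) with ((x - x0) * (y - y0) + (x - x0) * y0 + x0 * (y - y0)) by ring.
  pose proof (Rabs_triang ((x - x0) * (y - y0) + (x - x0) * y0) (x0 * (y - y0))).
  pose proof (Rabs_triang ((x - x0) * (y - y0)) ((x - x0) * y0)).
  rewrite !Rabs_mult in *.
  pose proof (Rabs_pos (x - x0)); pose proof (Rabs_pos (y - y0));
  pose proof (Rabs_pos x0); pose proof (Rabs_pos y0).
  unfold M in HhM; nra.
Qed.

Lemma tube_lemma (X : Type) (A : X -> Prop) (D : X -> R) (P : X -> R -> Prop) (a b : R) :
  a <= b ->
  (forall s, a <= s <= b -> exists e, 0 < e /\ forall x s', A x -> D x < e ->
      Rabs (s' - s) < e -> a <= s' <= b -> P x s') ->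
  exists e, 0 < e /\ forall x, A x -> D x < e -> forall s, a <= s <= b -> P x s.
Proof.
  intros Hab Hloc.
  set (good := fun t => a <= t <= b /\ exists e, 0 < e /\
    forall x, A x -> D x < e -> forall s, a <= s <= t -> P x s).
  assert (good_a : good a).
  { split; [lra|]. destruct (Hloc a ltac:(lra)) as [e [He H]].
    exists e; split; [exact He|]; intros x Ax Dx s Hs.
    apply H; [exact Ax|exact Dx| |lra]. replace (s - a) with 0 by lra; rewrite Rabs_R0; lra. }
  destruct (completeness good (ex_intro _ b (fun t Gt => proj2 (proj1 Gt)))
    (ex_intro _ a good_a)) as [c [Hub Hlub]].
  assert (Hac : a <= c) by (apply Hub; exact good_a).
  assert (Hcb : c <= b) by (apply Hlub; intros t [Ht _]; lra).
  destruct (Hloc c ltac:(lra)) as [ec [Hec Hc]].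
  assert (Hnear : exists t, good t /\ c - ec < t).
  { apply NNPP; intro Hn; enough (c <= c - ec) by lra.
    apply Hlub; intros t Gt; apply Rnot_lt_le; intro; apply Hn; exists t; auto. }
  destruct Hnear as [t [[Ht [et [Het Hst]]] Hct]].
  set (t' := Rmin b (c + ec / 2)).
  assert (Ht'_le : t' <= b /\ t' <= c + ec / 2) by (split; [apply Rmin_l|apply Rmin_r]).
  assert (good_t' : good t').
  { split; [split; [apply Rmin_glb|]; lra|].
    exists (Rmin et ec); split; [apply Rmin_glb_lt; auto|].
    intros x Ax Dx s Hs; pose proof (Rmin_l et ec); pose proof (Rmin_r et ec).
    destruct (Rle_dec s t).
    - apply Hst; auto; lra.
    - apply Hc; [exact Ax|lra|apply Rabs_def1; lra|lra]. }
  assert (Ht'b : t' = b).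
  { pose proof (Hub t' good_t'); unfold t' in *.
    destruct (Rle_dec b (c + ec / 2)); [apply Rmin_left; lra|].
    rewrite Rmin_right in * by lra; lra. }
  destruct good_t' as [_ [e [He Hp]]]; exists e; split; [exact He|].
  intros x Ax Dx s Hs; apply (Hp x Ax Dx); lra.
Qed.

Definition tangent0 (p : PolyMap) : R * R * R := (pf p 1, pg p 1, ph p 1).
Definition speed0 (p : PolyMap) : R := sqrt (sq3 (tangent0 p)).
Definition scale3 (a : R) (v : R * R * R) : R * R * R :=
  let '(x, y, z) := v in (a * x, a * y, a * z).

(* [rescale p s] is [t |-> s p(0) + l (p(s t) - p(0)) / s] with [l = dilation p s]: it is
   [p] at [s = 1] and the line [t |-> t p'(0) / |p'(0)|] at [s = 0]. *)
Definition dilation (p : PolyMap) (s : R) : R := s + (1 - s) * / speed0 p.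
Definition rescale_coef (c : nat -> R) (l s : R) (i : nat) : R :=
  match i with O => s * c O | S j => l * c (S j) * s ^ j end.
Definition rescale (p : PolyMap) (s : R) : PolyMap :=
  ((rescale_coef (pf p) (dilation p s) s, rescale_coef (pg p) (dilation p s) s),
   rescale_coef (ph p) (dilation p s) s).

Lemma coef_close d p q i e : in_A d p -> in_A d q -> 0 < e -> distA2 d p q < e * e ->
  Rabs (pf q i - pf p i) < e /\ Rabs (pg q i - pg p i) < e /\ Rabs (ph q i - ph p i) < e.
Proof.
  intros Hp Hq He Hd.
  destruct (Compare_dec.le_lt_dec i d) as [Hi|Hi].
  - assert (Hsq : forall a, 0 <= a * a) by (intro; nra).
    pose proof (sum_term_le (fun i =>
      (pf p i - pf q i) * (pf p i - pf q i) + (pg p i - pg q i) * (pg p i - pg q i) +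
      (ph p i - ph q i) * (ph p i - ph q i)) d i) as Hterm.
    cbv beta in Hterm; fold (distA2 d p q) in Hterm.
    specialize (Hterm (fun j => ltac:(pose proof (Hsq (pf p j - pf q j));
      pose proof (Hsq (pg p j - pg q j)); pose proof (Hsq (ph p j - ph q j)); lra)) Hi).
    pose proof (Hsq (pf p i - pf q i)); pose proof (Hsq (pg p i - pg q i));
    pose proof (Hsq (ph p i - ph q i)).
    repeat split; apply sq_lt_Rabs; nra.
  - destruct (Hp i) as [P1 [P2 P3]]; destruct (Hq i) as [Q1 [Q2 Q3]].
    rewrite P1, P2, P3, Q1, Q2, Q3 by lia; rewrite Rminus_diag, Rabs_R0; auto.
Qed.

Lemma distA2_refl d p : distA2 d p p = 0.
Proof. apply sum_eq_R0; intros; ring. Qed.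

Section JointContinuity.

Variables (d : nat) (p0 : PolyMap) (s0 : R).

Definition cont_at (F : PolyMap -> R -> R) : Prop :=
  forall e, 0 < e -> exists h, 0 < h /\ forall q s, in_A d q -> distA2 d p0 q < h ->
    Rabs (s - s0) < h -> Rabs (F q s - F p0 s0) < e.

Lemma cont_at_const c : cont_at (fun _ _ => c).
Proof.
  intros e He; exists 1; split; [lra|]; intros; rewrite Rminus_diag, Rabs_R0; exact He.
Qed.

Lemma cont_at_param : cont_at (fun _ s => s).
Proof. intros e He; exists e; split; auto. Qed.

Lemma cont_at_opp F : cont_at F -> cont_at (fun q s => - F q s).
Proof.
  intros HF e He; destruct (HF e He) as [h [Hh HFh]]; exists h; split; [exact Hh|].
  intros q s Hq Hd Hs; replace (- F q s - - F p0 s0) with (- (F q s - F p0 s0)) by ring.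
  rewrite Rabs_Ropp; auto.
Qed.

Lemma cont_at_plus F G : cont_at F -> cont_at G -> cont_at (fun q s => F q s + G q s).
Proof.
  intros HF HG e He.
  destruct (HF (e / 2)) as [h1 [H1 HF1]]; [lra|].
  destruct (HG (e / 2)) as [h2 [H2 HG2]]; [lra|].
  exists (Rmin h1 h2); split; [apply Rmin_glb_lt; auto|].
  intros q s Hq Hd Hs; pose proof (Rmin_l h1 h2); pose proof (Rmin_r h1 h2).
  specialize (HF1 q s Hq ltac:(lra) ltac:(lra)); specialize (HG2 q s Hq ltac:(lra) ltac:(lra)).
  replace (F q s + G q s - (F p0 s0 + G p0 s0)) with ((F q s - F p0 s0) + (G q s - G p0 s0))
    by ring.
  pose proof (Rabs_triang (F q s - F p0 s0) (G q s - G p0 s0)); lra.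
Qed.

Lemma cont_at_mult F G : cont_at F -> cont_at G -> cont_at (fun q s => F q s * G q s).
Proof.
  intros HF HG e He.
  destruct (Rmult_continuous_at (F p0 s0) (G p0 s0) e He) as [k [Hk Hm]].
  destruct (HF k Hk) as [h1 [H1 HF1]]; destruct (HG k Hk) as [h2 [H2 HG2]].
  exists (Rmin h1 h2); split; [apply Rmin_glb_lt; auto|].
  intros q s Hq Hd Hs; pose proof (Rmin_l h1 h2); pose proof (Rmin_r h1 h2).
  apply Hm; [apply HF1|apply HG2]; auto; lra.
Qed.

Lemma cont_at_pow F n : cont_at F -> cont_at (fun q s => F q s ^ n).
Proof.
  intro HF; induction n as [|n IH]; simpl; [apply cont_at_const|apply cont_at_mult; auto].
Qed.

Lemma cont_at_comp F g : cont_at F -> continuity_pt g (F p0 s0) ->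
  cont_at (fun q s => g (F q s)).
Proof.
  intros HF Hg e He.
  destruct (continuity_pt_eps g _ Hg e He) as [k [Hk Hgk]].
  destruct (HF k Hk) as [h [Hh HFh]].
  exists h; split; [exact Hh|]; intros; apply Hgk; auto.
Qed.

Lemma cont_at_uniform (F : nat -> PolyMap -> R -> R) n :
  (forall i, (i <= n)%nat -> cont_at (F i)) ->
  forall e, 0 < e -> exists h, 0 < h /\ forall q s, in_A d q -> distA2 d p0 q < h ->
    Rabs (s - s0) < h -> forall i, (i <= n)%nat -> Rabs (F i q s - F i p0 s0) < e.
Proof.
  intros HF e He; induction n as [|n IH].
  - destruct (HF 0%nat (le_n _) e He) as [h [Hh HFh]]; exists h; split; [exact Hh|].
    intros q s Hq Hd Hs i Hi; replace i with 0%nat by lia; auto.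
  - destruct IH as [h1 [H1 Hh1]]; [intros; apply HF; lia|].
    destruct (HF (S n) (le_n _) e He) as [h2 [H2 Hh2]].
    exists (Rmin h1 h2); split; [apply Rmin_glb_lt; auto|].
    intros q s Hq Hd Hs i Hi; pose proof (Rmin_l h1 h2); pose proof (Rmin_r h1 h2).
    destruct (Nat.eq_dec i (S n)) as [->|Hne]; [apply Hh2|apply Hh1]; auto; try lra; lia.
Qed.

Hypothesis p0_in_A : in_A d p0.

Lemma cont_at_pf i : cont_at (fun q _ => pf q i).
Proof.
  intros e He; exists (e * e); split; [nra|]; intros.
  apply (coef_close d p0 q i e); auto.
Qed.

Lemma cont_at_pg i : cont_at (fun q _ => pg q i).
Proof.
  intros e He; exists (e * e); split; [nra|]; intros.
  apply (coef_close d p0 q i e); auto.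
Qed.

Lemma cont_at_ph i : cont_at (fun q _ => ph q i).
Proof.
  intros e He; exists (e * e); split; [nra|]; intros.
  apply (coef_close d p0 q i e); auto.
Qed.

Hypothesis speed0_p0_pos : 0 < speed0 p0.

Lemma cont_at_inv_speed0 : cont_at (fun q _ => / speed0 q).
Proof.
  assert (Hsq3 : cont_at (fun q _ => sq3 (tangent0 q))).
  { repeat apply cont_at_plus; apply cont_at_mult;
      first [apply cont_at_pf | apply cont_at_pg | apply cont_at_ph]. }
  apply (cont_at_comp _ (fun x => / sqrt x) Hsq3).
  apply (continuity_pt_inv sqrt); [|exact (Rgt_not_eq _ _ speed0_p0_pos)].
  apply continuity_pt_sqrt; simpl; nra.
Qed.

Lemma cont_at_dilation : cont_at dilation.
Proof.
  apply cont_at_plus; [apply cont_at_param|apply cont_at_mult; [|apply cont_at_inv_speed0]].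
  apply cont_at_plus; [apply cont_at_const|apply cont_at_opp, cont_at_param].
Qed.

Lemma cont_at_rescale_coef (C : PolyMap -> nat -> R) i :
  (forall j, cont_at (fun q _ => C q j)) ->
  cont_at (fun q s => rescale_coef (C q) (dilation q s) s i).
Proof.
  intro HC; destruct i as [|j]; simpl.
  - apply cont_at_mult; [apply cont_at_param|apply HC].
  - repeat apply cont_at_mult; auto using cont_at_dilation, cont_at_pow, cont_at_param.
Qed.

Lemma rescale_continuous_at e : 0 < e -> exists h, 0 < h /\ forall q s, in_A d q ->
  distA2 d p0 q < h -> Rabs (s - s0) < h -> distA2 d (rescale p0 s0) (rescale q s) < e.
Proof.
  intro He.
  assert (HSd : 0 < INR (S d)) by apply lt_0_INR, Nat.lt_0_succ.
  set (eta := Rmin 1 (e / (3 * INR (S d)))).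
  assert (Heta0 : 0 < eta) by (apply Rmin_glb_lt; [lra|apply Rdiv_lt_0_compat; lra]).
  assert (Heta1 : eta <= 1) by apply Rmin_l.
  assert (Heta2 : INR (S d) * (3 * eta) <= e).
  { pose proof (Rmin_r 1 (e / (3 * INR (S d)))) as Hr; fold eta in Hr.
    apply (Rmult_le_compat_l (INR (S d) * 3)) in Hr; [|lra].
    replace (INR (S d) * 3 * (e / (3 * INR (S d)))) with e in Hr by (field; lra); lra. }
  destruct (cont_at_uniform (fun i q s => rescale_coef (pf q) (dilation q s) s i) d
    (fun i _ => cont_at_rescale_coef pf i cont_at_pf) eta Heta0) as [h1 [H1 K1]].
  destruct (cont_at_uniform (fun i q s => rescale_coef (pg q) (dilation q s) s i) d
    (fun i _ => cont_at_rescale_coef pg i cont_at_pg) eta Heta0) as [h2 [H2 K2]].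
  destruct (cont_at_uniform (fun i q s => rescale_coef (ph q) (dilation q s) s i) d
    (fun i _ => cont_at_rescale_coef ph i cont_at_ph) eta Heta0) as [h3 [H3 K3]].
  exists (Rmin h1 (Rmin h2 h3)); split; [repeat apply Rmin_glb_lt; auto|].
  intros q s Hq Hd Hs.
  pose proof (Rmin_l h1 (Rmin h2 h3)); pose proof (Rmin_r h1 (Rmin h2 h3));
  pose proof (Rmin_l h2 h3); pose proof (Rmin_r h2 h3).
  apply Rlt_le_trans with (2 := Heta2), sum_lt_mul; intros i Hi.
  specialize (K1 q s Hq ltac:(lra) ltac:(lra) i Hi);
  specialize (K2 q s Hq ltac:(lra) ltac:(lra) i Hi);
  specialize (K3 q s Hq ltac:(lra) ltac:(lra) i Hi).
  apply Rabs_lt_sq in K1; apply Rabs_lt_sq in K2; apply Rabs_lt_sq in K3.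
  assert (eta * eta <= eta) by nra.
  unfold pf, pg, ph, rescale; simpl; lra.
Qed.

End JointContinuity.

Lemma sq3_pos v : v <> (0, 0, 0) -> 0 < sq3 v.
Proof.
  destruct v as [[x y] z]; intro Hv; simpl.
  destruct (Req_dec x 0); [destruct (Req_dec y 0)|].
  - assert (z <> 0) by (intro; apply Hv; subst; reflexivity).
    pose proof (Rsqr_pos_lt z); unfold Rsqr in *; nra.
  - pose proof (Rsqr_pos_lt y); unfold Rsqr in *; nra.
  - pose proof (Rsqr_pos_lt x); unfold Rsqr in *; nra.
Qed.

Lemma sq3_scale3 a v : sq3 (scale3 a v) = a * a * sq3 v.
Proof. destruct v as [[x y] z]; simpl; ring. Qed.

Lemma pderiv_at0 c N : pderiv c N 0 = c 1%nat.
Proof.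
  induction N as [|N IH]; unfold pderiv in *; simpl in *; [ring|].
  rewrite IH; ring.
Qed.

Lemma knot_tangent0_neq0 p : is_poly_knot p -> tangent0 p <> (0, 0, 0).
Proof.
  intros [N [_ [_ Himm]]] E; apply (Himm 0).
  unfold map_deriv; rewrite !pderiv_at0; exact E.
Qed.

Lemma speed0_pos p : is_poly_knot p -> 0 < speed0 p.
Proof. intro Hp; apply sqrt_lt_R0, sq3_pos, knot_tangent0_neq0, Hp. Qed.

Lemma knot_deg_bound_succ p : is_poly_knot p -> exists M,
  deg_bound p (S M) /\ (forall s t, map_eval p (S M) s = map_eval p (S M) t -> s = t) /\
  (forall t, map_deriv p (S M) t <> (0, 0, 0)).
Proof.
  intro Hp; pose proof (knot_tangent0_neq0 p Hp) as Ht.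
  destruct Hp as [[|M] HM]; [|exists M; exact HM].
  destruct HM as [Hd _]; destruct (Hd 1%nat ltac:(lia)) as [A [B C]].
  exfalso; apply Ht; unfold tangent0; rewrite A, B, C; reflexivity.
Qed.

Lemma dilation_pos p s : 0 < speed0 p -> 0 <= s <= 1 -> 0 < dilation p s.
Proof.
  intros Hn Hs; unfold dilation.
  pose proof (Rinv_0_lt_compat _ Hn); destruct (Req_dec s 1); [subst; lra|nra].
Qed.

Lemma peval_rescale c l s N t :
  s * peval (rescale_coef c l s) N t = s * s * c O + l * (peval c N (s * t) - c O).
Proof.
  induction N as [|N IH]; unfold peval in *; simpl in *; [ring|].
  rewrite Rmult_plus_distr_l, IH, Rpow_mult_distr; simpl; ring.
Qed.

Lemma peval_rescale_at0 c l M t : peval (rescale_coef c l 0) (S M) t = l * c 1%nat * t.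
Proof.
  induction M as [|M IH]; unfold peval in *; simpl in *; [ring|].
  rewrite IH; ring.
Qed.

Lemma pderiv_rescale c l s N t : pderiv (rescale_coef c l s) N t = l * pderiv c N (s * t).
Proof.
  induction N as [|N IH]; unfold pderiv in *; simpl in *; [ring|].
  rewrite IH, Rpow_mult_distr; ring.
Qed.

Lemma peval_rescale_inj c l s N t1 t2 : l <> 0 -> s <> 0 ->
  peval (rescale_coef c l s) N t1 = peval (rescale_coef c l s) N t2 ->
  peval c N (s * t1) = peval c N (s * t2).
Proof.
  intros Hl Hs E; apply (f_equal (Rmult s)) in E; rewrite !peval_rescale in E.
  apply (Rmult_eq_reg_l l); [lra|exact Hl].
Qed.

Lemma peval_rescale_at0_inj c l M t1 t2 : l <> 0 -> t1 <> t2 ->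
  peval (rescale_coef c l 0) (S M) t1 = peval (rescale_coef c l 0) (S M) t2 -> c 1%nat = 0.
Proof.
  intros Hl Ht E; rewrite !peval_rescale_at0 in E.
  apply (Rmult_eq_reg_l (l * (t1 - t2))); [lra|].
  intro H0; apply Rmult_integral in H0 as [|]; lra.
Qed.

Lemma rescale_deg_bound p s N : deg_bound p N -> deg_bound (rescale p s) N.
Proof.
  intros Hd [|j] Hj; [lia|]; destruct (Hd (S j) Hj) as [A [B C]].
  unfold rescale, pf, pg, ph in *; simpl; rewrite A, B, C; repeat split; ring.
Qed.

Lemma rescale_in_A d p s : in_A d p -> in_A d (rescale p s).
Proof.
  intros H i; destruct (H i) as [A [B C]]; unfold rescale, pf, pg, ph in *.
  destruct i; simpl; repeat split; intro Hi;
    [rewrite A|rewrite B|rewrite C|rewrite A|rewrite B|rewrite C]; auto; ring.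
Qed.

Lemma rescale_knot p s : is_poly_knot p -> 0 <= s <= 1 -> is_poly_knot (rescale p s).
Proof.
  intros Hp Hs.
  assert (Hl : dilation p s <> 0) by (apply Rgt_not_eq, dilation_pos, Hs; apply speed0_pos, Hp).
  destruct (knot_deg_bound_succ p Hp) as [M [Hd [Hinj Himm]]].
  exists (S M); split; [apply rescale_deg_bound, Hd|split].
  - intros t1 t2 E; unfold map_eval, rescale, pf, pg, ph in E; simpl in E.
    injection E as E1 E2 E3.
    destruct (Req_dec s 0) as [->|Hs0].
    + apply NNPP; intro Ht; apply (knot_tangent0_neq0 p Hp); unfold tangent0, pf, pg, ph.
      rewrite (peval_rescale_at0_inj _ _ _ _ _ Hl Ht E1),
        (peval_rescale_at0_inj _ _ _ _ _ Hl Ht E2), (peval_rescale_at0_inj _ _ _ _ _ Hl Ht E3).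
      reflexivity.
    + apply (Rmult_eq_reg_l s); [|exact Hs0]; apply Hinj; unfold map_eval, pf, pg, ph.
      rewrite (peval_rescale_inj _ _ _ _ _ _ Hl Hs0 E1),
        (peval_rescale_inj _ _ _ _ _ _ Hl Hs0 E2), (peval_rescale_inj _ _ _ _ _ _ Hl Hs0 E3).
      reflexivity.
  - intros t E; apply (Himm (s * t)).
    unfold map_deriv, rescale, pf, pg, ph in E |- *; simpl in E; rewrite !pderiv_rescale in E.
    injection E as E1 E2 E3.
    apply Rmult_integral in E1 as [|E1]; [contradiction|];
    apply Rmult_integral in E2 as [|E2]; [contradiction|];
    apply Rmult_integral in E3 as [|E3]; [contradiction|].
    rewrite E1, E2, E3; reflexivity.
Qed.

Definition line_coef (a : R) (i : nat) : R := match i with 1%nat => a | _ => 0 end.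
Definition line (v : R * R * R) : PolyMap :=
  let '(x, y, z) := v in ((line_coef x, line_coef y), line_coef z).
Definition unit_tangent0 (p : PolyMap) : R * R * R := scale3 (/ speed0 p) (tangent0 p).

Lemma tangent0_line v : tangent0 (line v) = v.
Proof. destruct v as [[x y] z]; reflexivity. Qed.

Lemma line_knot v : v <> (0, 0, 0) -> is_poly_knot (line v).
Proof.
  destruct v as [[x y] z]; intro Hv; exists 1%nat; split; [|split].
  - intros [|[|i]] Hi; [lia|lia|repeat split].
  - intros t1 t2 E; unfold map_eval, peval, pf, pg, ph in E; simpl in E.
    injection E as E1 E2 E3; apply NNPP; intro Ht; apply Hv.
    assert (Ht0 : t1 - t2 <> 0) by lra.
    f_equal; [f_equal|]; apply (Rmult_eq_reg_l (t1 - t2)); auto; nra.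
  - intros t E; apply Hv; unfold map_deriv, pderiv, pf, pg, ph in E; simpl in E.
    injection E as E1 E2 E3; f_equal; [f_equal|]; lra.
Qed.

Lemma line_in_A v : in_A 3 (line v).
Proof.
  destruct v as [[x y] z]; intros [|[|i]]; simpl; repeat split; intros; auto; lia.
Qed.

Lemma distA2_line v w : distA2 3 (line v) (line w) = dist2_R3 w v.
Proof.
  destruct v as [[x y] z], w as [[x' y'] z']; unfold distA2, pf, pg, ph; simpl; ring.
Qed.

Lemma sq3_unit_tangent0 p : 0 < speed0 p -> sq3 (unit_tangent0 p) = 1.
Proof.
  intro Hn; unfold unit_tangent0; rewrite sq3_scale3.
  assert (Hsq : sq3 (tangent0 p) = speed0 p * speed0 p)
    by (symmetry; apply sqrt_sqrt; destruct (tangent0 p) as [[x y] z]; simpl; nra).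
  rewrite Hsq; field; lra.
Qed.

Lemma rescale_at0 p : 0 < speed0 p -> rescale p 0 = line (unit_tangent0 p).
Proof.
  intro Hn; unfold rescale, dilation, line, unit_tangent0, tangent0; simpl.
  f_equal; [f_equal|]; apply functional_extensionality; intros [|[|i]]; simpl; ring.
Qed.

Lemma rescale_at1 p : rescale p 1 = p.
Proof.
  destruct p as [[f g] h]; unfold rescale, dilation, pf, pg, ph; simpl.
  f_equal; [f_equal|]; apply functional_extensionality; intros [|i]; simpl;
    rewrite ?pow1; ring.
Qed.

Lemma deg_bound_in_A p N : deg_bound p N -> in_A (N + 2) p.
Proof. intros H i; repeat split; intro; apply H; lia. Qed.

Lemma S2_neq0 (v : S2) : proj1_sig v <> (0, 0, 0).
Proof. destruct v as [v Hv]; simpl; intro E; subst v; simpl in Hv; lra. Qed.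

Lemma Knots_eq (a b : Knots) : proj1_sig a = proj1_sig b -> a = b.
Proof. destruct a, b; simpl; intro; subst; f_equal; apply proof_irrelevance. Qed.

Lemma S2_eq (a b : S2) : proj1_sig a = proj1_sig b -> a = b.
Proof. destruct a, b; simpl; intro; subst; f_equal; apply proof_irrelevance. Qed.

Definition tangent_map (x : Knots) : S2 :=
  exist _ (unit_tangent0 (proj1_sig x)) (sq3_unit_tangent0 _ (speed0_pos _ (proj2_sig x))).

Definition line_map (v : S2) : Knots := exist _ (line (proj1_sig v)) (line_knot _ (S2_neq0 v)).

Definition rescale_homotopy (z : Knots * I01) : Knots :=
  exist _ (rescale (proj1_sig (fst z)) (proj1_sig (snd z)))
    (rescale_knot _ _ (proj2_sig (fst z)) (proj2_sig (snd z))).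

Lemma K_top_intro (V : Knots -> Prop) :
  (forall d, (2 <= d)%nat -> forall p : Knots, in_A d (proj1_sig p) -> V p ->
    exists e, 0 < e /\ forall q : Knots, in_A d (proj1_sig q) ->
      distA2 d (proj1_sig p) (proj1_sig q) < e -> V q) ->
  K_top V.
Proof.
  intros HV d Hd p Hp Vp; destruct (HV d Hd p Hp Vp) as [e [He HVe]].
  exists (sqrt e); split; [apply sqrt_lt_R0, He|].
  intros q Hq Hdq; apply HVe; [exact Hq|]; rewrite sqrt_sqrt in Hdq by lra; exact Hdq.
Qed.

Lemma tangent_map_continuous : continuous K_top S2_top tangent_map.
Proof.
  intros V HV; apply K_top_intro; intros d Hd p Hp Vp.
  destruct (HV _ Vp) as [eps [Heps Hball]].
  pose proof (speed0_pos _ (proj2_sig p)) as Hn.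
  assert (Hcomp : forall C : PolyMap -> nat -> R, (forall i, cont_at d (proj1_sig p) 0 (fun q _ => C q i)) ->
    cont_at d (proj1_sig p) 0 (fun q _ => / speed0 q * C q 1%nat))
    by (intros C HC; apply cont_at_mult; [apply cont_at_inv_speed0|apply HC]; auto).
  destruct (Hcomp pf (cont_at_pf _ _ _ Hp) (eps / 2) ltac:(lra)) as [h1 [H1 K1]].
  destruct (Hcomp pg (cont_at_pg _ _ _ Hp) (eps / 2) ltac:(lra)) as [h2 [H2 K2]].
  destruct (Hcomp ph (cont_at_ph _ _ _ Hp) (eps / 2) ltac:(lra)) as [h3 [H3 K3]].
  exists (Rmin h1 (Rmin h2 h3)); split; [repeat apply Rmin_glb_lt; auto|].
  intros q Hq Hdq.
  pose proof (Rmin_l h1 (Rmin h2 h3)); pose proof (Rmin_r h1 (Rmin h2 h3));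
  pose proof (Rmin_l h2 h3); pose proof (Rmin_r h2 h3).
  assert (Rabs (0 - 0) < Rmin h1 (Rmin h2 h3))
    by (rewrite Rminus_diag, Rabs_R0; repeat apply Rmin_glb_lt; auto).
  specialize (K1 (proj1_sig q) 0 Hq ltac:(lra) ltac:(lra));
  specialize (K2 (proj1_sig q) 0 Hq ltac:(lra) ltac:(lra));
  specialize (K3 (proj1_sig q) 0 Hq ltac:(lra) ltac:(lra)).
  apply Rabs_lt_sq in K1; apply Rabs_lt_sq in K2; apply Rabs_lt_sq in K3.
  apply Hball; simpl; unfold unit_tangent0, tangent0; simpl; nra.
Qed.

Lemma line_map_continuous : continuous S2_top K_top line_map.
Proof.
  intros V HV v Vv.
  destruct (HV 3%nat ltac:(lia) (line_map v) (line_in_A _) Vv) as [eps [Heps Hball]].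
  exists eps; split; [exact Heps|]; intros w Hw.
  apply Hball; [apply line_in_A|]; simpl; rewrite distA2_line; exact Hw.
Qed.

Lemma I01_ball_open (y : I01) r : I01_top (fun s => Rabs (proj1_sig s - proj1_sig y) < r).
Proof.
  intros p Hp; exists (r - Rabs (proj1_sig p - proj1_sig y)); split; [lra|].
  intros q Hq; pose proof (Rabs_triang (proj1_sig q - proj1_sig p) (proj1_sig p - proj1_sig y)).
  replace (proj1_sig q - proj1_sig p + (proj1_sig p - proj1_sig y))
    with (proj1_sig q - proj1_sig y) in * by ring; lra.
Qed.

Lemma fst_continuous {X : Type} (TX : topology X) :
  continuous (prod_top TX I01_top) TX (fun z : X * I01 => fst z).
Proof.
  intros V HV x y Hxy; exists V, (fun _ => True); repeat split; auto.
  intros p _; exists 1; split; [lra|auto].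
Qed.

Lemma rescale_homotopy_open_at (V : Knots -> Prop) d (q : Knots) (s : I01) :
  K_top V -> (2 <= d)%nat -> in_A d (proj1_sig q) -> V (rescale_homotopy (q, s)) ->
  exists e, 0 < e /\ forall (q' : Knots) (s' : I01), in_A d (proj1_sig q') ->
    distA2 d (proj1_sig q) (proj1_sig q') < e ->
    Rabs (proj1_sig s' - proj1_sig s) < e -> V (rescale_homotopy (q', s')).
Proof.
  intros HV Hd Hq Vqs.
  destruct (HV d Hd (rescale_homotopy (q, s)) (rescale_in_A _ _ _ Hq) Vqs) as [eps [Heps Hball]].
  destruct (rescale_continuous_at d (proj1_sig q) (proj1_sig s) Hq
    (speed0_pos _ (proj2_sig q)) (eps * eps) ltac:(nra)) as [h [Hh Hc]].
  exists h; split; [exact Hh|]; intros q' s' Hq' Hdq Hs'.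
  apply Hball; [apply rescale_in_A, Hq'|apply Hc; auto].
Qed.

(* A neighbourhood of [(x, y)] in [K * I01] must be open in every [O_d] at once; the set of
   knots whose whole slice over [|s - y| <= r] lands in [V] is one, by the tube lemma. *)
Lemma rescale_homotopy_tube_open (V : Knots -> Prop) (y : I01) r : K_top V -> 0 <= r ->
  K_top (fun q => forall s, Rabs (proj1_sig s - proj1_sig y) <= r -> V (rescale_homotopy (q, s))).
Proof.
  intros HV Hr; apply K_top_intro; intros d Hd p Hp HUp.
  destruct (proj2_sig y) as [Hy0 Hy1].
  set (a := Rmax 0 (proj1_sig y - r)); set (b := Rmin 1 (proj1_sig y + r)).
  assert (Hab : 0 <= a /\ proj1_sig y - r <= a /\ b <= 1 /\ b <= proj1_sig y + r /\ a <= b).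
  { unfold a, b; repeat split; try apply Rmax_l; try apply Rmax_r; try apply Rmin_l;
      try apply Rmin_r; apply Rmax_lub; apply Rmin_glb; lra. }
  destruct (tube_lemma Knots (fun q => in_A d (proj1_sig q))
    (fun q => distA2 d (proj1_sig p) (proj1_sig q))
    (fun q s => forall h : 0 <= s <= 1, V (rescale_homotopy (q, exist _ s h))) a b)
    as [e [He Htube]]; [lra| |].
  - intros s Hs.
    assert (hs : 0 <= s <= 1) by lra.
    destruct (rescale_homotopy_open_at V d p (exist _ s hs) HV Hd Hp)
      as [e [He Hopen]]; [apply HUp; simpl; apply Rabs_le; lra|].
    exists e; split; [exact He|]; intros q s' Hq Hdq Hs' _ h.
    apply (Hopen q (exist _ s' h)); auto.
  - exists e; split; [exact He|]; intros q Hq Hdq [s hs] Hs; simpl in Hs.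
    pose proof (Rle_abs (s - proj1_sig y)); pose proof (Rle_abs (- (s - proj1_sig y))); rewrite Rabs_Ropp in *.
    apply (Htube q Hq Hdq s); unfold a, b; split;
      [apply Rmax_lub|apply Rmin_glb]; lra.
Qed.

Lemma rescale_homotopy_continuous :
  continuous (prod_top K_top I01_top) K_top rescale_homotopy.
Proof.
  intros V HV x y Vxy.
  destruct (proj2_sig x) as [N [HN _]].
  destruct (rescale_homotopy_open_at V (N + 2) x y HV ltac:(lia) (deg_bound_in_A _ _ HN) Vxy)
    as [e [He Hopen]].
  exists (fun q => forall s, Rabs (proj1_sig s - proj1_sig y) <= e / 2 ->
    V (rescale_homotopy (q, s))).
  exists (fun s => Rabs (proj1_sig s - proj1_sig y) < e / 2).
  repeat split.
  - apply rescale_homotopy_tube_open; [exact HV|lra].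
  - apply I01_ball_open.
  - intros s Hs; apply Hopen; [apply deg_bound_in_A, HN|rewrite distA2_refl; exact He|lra].
  - rewrite Rminus_diag, Rabs_R0; lra.
  - intros q s Uq Ws; apply Uq; lra.
Qed.

Lemma tangent_map_line_map v : tangent_map (line_map v) = v.
Proof.
  apply S2_eq; destruct v as [v Hv]; simpl.
  unfold unit_tangent0, speed0; rewrite tangent0_line, Hv, sqrt_1, Rinv_1.
  destruct v as [[x y] z]; simpl; f_equal; [f_equal|]; ring.
Qed.

Theorem mainTheorem2 : homotopy_equivalent K_top S2_top.
Proof.
  exists tangent_map, line_map.
  split; [apply tangent_map_continuous|split; [apply line_map_continuous|split]].
  - exists rescale_homotopy; split; [apply rescale_homotopy_continuous|split];
      intros x t Ht; apply Knots_eq; simpl; rewrite Ht.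
    + apply rescale_at0, speed0_pos, (proj2_sig x).
    + apply rescale_at1.
  - exists (fun z => fst z); split; [apply fst_continuous|split];
      intros; simpl; [symmetry; apply tangent_map_line_map|reflexivity].
Qed.
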